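(* Let $G$ be an instance and $b>1$, and let $R$ be the minimal reward placed at $t$ required to motivate the sophisticated agent (with abandonment) with present-bias parameter $b$ to reach $t$ from $s$. Then $R\le b\cdot C_o(s)$.
   Context: An instance is a finite directed acyclic graph $G=(V,E)$ with nonnegative edge costs $c(u,v)$, start node $s$ and target node $t$, where $t$ is the unique node with no outgoing edges; $C_o(u)$ is the minimum cost of a $u$–$t$ path. Sophisticated agent with bias $b$ and reward $R$ at $t$, which may abandon: process nodes in reverse topological order; $t$ is never abandoned and $C_R(t)=0$. For $u\neq t$, among out-edges $(u,v)$ with $v$ not abandoned let $P(u,v)=b\,c(u,v)+C_R(v)$; if none exists or all have $P(u,v)>R$, $u$ is abandoned; otherwise the agent at $u$ moves to $v^*(u)\in\arg\min P(u,v)$ and $C_R(u)=c(u,v^*(u))+C_R(v^*(u))$. The agent is motivated to reach $t$ (the graph is traversable for $R$) iff $s$ is not abandoned. *)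

From mathcomp Require Import all_boot all_order all_algebra.
Set Implicit Arguments. Unset Strict Implicit. Unset Printing Implicit Defensive.
Import Order.TTheory GRing.Theory Num.Theory.
Local Open Scope ring_scope.

Fixpoint walk_cost {R : numDomainType} {V : Type} (c : V -> V -> R) (u : V)
  (p : seq V) : R :=
  match p with
  | [::] => 0
  | v :: p' => c u v + walk_cost c v p'
  end.

Definition acyclic {V : finType} (E : rel V) : Prop :=
  forall (u : V) (p : seq V), path E u p -> last u p = u -> p = [::].

Definition unique_sink {V : finType} (E : rel V) (t : V) : Prop :=
  forall u : V, (forall v, ~~ E u v) <-> u = t.

Definition nonneg_costs {R : numDomainType} {V : finType} (E : rel V)
  (c : V -> V -> R) : Prop :=
  forall u v, E u v -> 0 <= c u v.

Definition instance {R : numDomainType} {V : finType} (E : rel V)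
  (c : V -> V -> R) (t : V) : Prop :=
  [/\ acyclic E, unique_sink E t & nonneg_costs E c].

Definition is_opt_cost {R : numDomainType} {V : finType} (E : rel V)
  (c : V -> V -> R) (t u : V) (x : R) : Prop :=
  (exists p, [/\ path E u p, last u p = t & walk_cost c u p = x]) /\
  (forall p, path E u p -> last u p = t -> x <= walk_cost c u p).

(* A possible outcome of the sophisticated agent's backward computation with
   bias b and reward r: ab u = true iff u is abandoned, CR u = C_R(u) for
   non-abandoned u. Any tie-breaking choice of v*(u) in the argmin is allowed;
   in a DAG, these equations are exactly the result of processing the nodes
   in reverse topological order with some tie-breaking. *)
Definition soph_run {R : numDomainType} {V : finType} (E : rel V)
  (c : V -> V -> R) (t : V) (b r : R) (ab : V -> bool) (CR : V -> R) : Prop :=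
  ab t = false /\ CR t = 0 /\
  forall u, u != t ->
    let P v := b * c u v + CR v in
    if ab u then
      forall v, E u v -> ~~ ab v -> r < P v
    else
      exists vs, [/\ E u vs, ~~ ab vs, P vs <= r,
        (forall v, E u v -> ~~ ab v -> P vs <= P v) &
        CR u = c u vs + CR vs].

(* The agent is motivated to reach t from s with reward r (whatever the
   tie-breaking): s is not abandoned. *)
Definition motivated {R : numDomainType} {V : finType} (E : rel V)
  (c : V -> V -> R) (s t : V) (b r : R) : Prop :=
  forall ab CR, soph_run E c t b r ab CR -> ab s = false.

(** Along a fixed u-t path p the sophisticated agent is never abandoned as
    long as b times the remaining cost of p is at most the reward: by backward
    induction on p, the agent at u could move to its successor v on p, whose
    perceived cost b c(u,v) + C_R(v) is at most b times the remaining cost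
    (because C_R(v) is), so it does not abandon, and since b >= 1 its chosen
    edge has actual cost C_R(u) at most that perceived cost.  Taking p optimal
    from s shows that the reward b C_o(s) already suffices. *)

From mathcomp Require Import all_boot all_order all_algebra.
Set Implicit Arguments. Unset Strict Implicit.
Import Order.TTheory GRing.Theory Num.Theory.
Local Open Scope ring_scope.

Lemma unique_sink_edge_neq (V : finType) (E : rel V) (t u v : V) :
  unique_sink E t -> E u v -> u != t.
Proof.
move=> sink_t Euv; apply/eqP => eq_ut.
by have := (sink_t u).2 eq_ut v; rewrite Euv.
Qed.

Section SophisticatedRun.

Variables (R : numDomainType) (V : finType) (E : rel V) (c : V -> V -> R).
Variables (t : V) (b r : R) (ab : V -> bool) (CR : V -> R).
Hypothesis sink_t : unique_sink E t.
Hypothesis c_ge0 : nonneg_costs E c.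
Hypothesis b_ge1 : 1 <= b.
Hypothesis run : soph_run E c t b r ab CR.

Lemma soph_run_edge u v :
  E u v -> ~~ ab v -> b * c u v + CR v <= r ->
  ab u = false /\ CR u <= b * c u v + CR v.
Proof.
move=> Euv ab_v Puv_le_r.
have := run.2.2 u (unique_sink_edge_neq sink_t Euv) => /=.
case: (ab u) => [abandon | [vs [Euvs _ _ vs_min ->]]].
  by have := lt_le_trans (abandon v Euv ab_v) Puv_le_r; rewrite ltxx.
split=> //; apply: le_trans (vs_min v Euv ab_v); rewrite lerD2r.
by rewrite ler_peMl // c_ge0.
Qed.

Lemma soph_run_path u p :
  path E u p -> last u p = t -> b * walk_cost c u p <= r ->
  ab u = false /\ CR u <= b * walk_cost c u p.
Proof.
elim: p u => [|v p IHp] u /=.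
  by move=> _ ->; rewrite run.1 run.2.1 mulr0.
move=> /andP[Euv path_vp] last_vp; rewrite mulrDr => cost_le_r.
have b_ge0 : 0 <= b by apply: le_trans b_ge1.
have [ab_v CR_v] : ab v = false /\ CR v <= b * walk_cost c v p.
  apply: IHp => //; apply: le_trans cost_le_r.
  by rewrite lerDr mulr_ge0 // c_ge0.
have Puv_le : b * c u v + CR v <= b * c u v + b * walk_cost c v p.
  by rewrite lerD2l.
have [-> CR_u] := soph_run_edge Euv (negbT ab_v) (le_trans Puv_le cost_le_r).
by split=> //; apply: le_trans Puv_le.
Qed.

End SophisticatedRun.

Theorem theorem2 (R : realFieldType) (V : finType) (E : rel V)
  (c : V -> V -> R) (s t : V) (b Co_s : R) :
  instance E c t -> 1 < b -> is_opt_cost E c t s Co_s ->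
  exists r : R, r <= b * Co_s /\ motivated E c s t b r.
Proof.
move=> [_ sink_t c_ge0] /ltW b_ge1 [[p [path_sp last_sp <-]] _].
exists (b * walk_cost c s p); split=> // ab CR run.
by have [] := soph_run_path sink_t c_ge0 b_ge1 run path_sp last_sp (lexx _).
Qed.
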